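(* Let $q=p^f$ with $p$ prime, and let $R=\mathbb F_{q^2}+\mathbb F_{q^2}u$ with $u^2=0$ and $ua=a^qu$ for $a\in\mathbb F_{q^2}$. Let $\rho=(R,R,\beta,\Phi)$ with $\beta$ and $\Phi$ as defined below. Then $\rho$ is a form ring (with $\beta$ admissible, associated anti-automorphism $(r+su)^J=r-s^qu$ and $\beta(v,w)=\beta(w,-v)$), and a left $R$-submodule $C\le R^N$ is a code of Type $\rho$ if and only if $C=C^{\perp_H}$, where $C^{\perp_H}=\{x\in R^N:\sum_{i=1}^N x_i\overline{c_i}=0\ \forall c\in C\}$ and $\overline{a+bu}:=a^q-bu$.
   Context: $\beta:R\times R\to\tfrac1p\mathbb Z/\mathbb Z$, $\beta(a'+b'u,a+bu):=\tfrac1p\mathrm{Tr}(ab'-a'b)$ with $\mathrm{Tr}$ the trace $\mathbb F_{q^2}\to\mathbb F_p\cong\mathbb Z/p\mathbb Z$. $\phi_0:R\to\tfrac1p\mathbb Z/\mathbb Z$, $\phi_0(a+bu):=\tfrac1p\mathrm{Tr}_{\mathbb F_q/\mathbb F_p}(a\,a^q)$, and $\Phi$ is the subgroup of maps $R\to\mathbb Q/\mathbb Z$ generated by $\{\phi_0[r]:r\in R\}$, where $(\phi[r])(v)=\phi(rv)$. General definitions: for a finite ring $R$ and finite left module $V$, $\beta:V\times V\to\mathbb Q/\mathbb Z$ biadditive is admissible if $v\mapsto\beta(v,\cdot)$ is an isomorphism $V\to\mathrm{Hom}(V,\mathbb Q/\mathbb Z)$, the set $M=\{\beta_r:r\in R\}$,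 $\beta_r(v,w)=\beta(v,rw)$, is closed under $\beta\mapsto\beta^\tau$, $\beta^\tau(v,w)=\beta(w,v)$, and $r\mapsto\beta_r$ is bijective; $J$ is defined by $\beta(rv,w)=\beta(v,r^Jw)$. $\mathrm{Quad}_0(V,\mathbb Q/\mathbb Z)$ is the group of maps $\phi$ with $\phi(0)=0$ and $\phi(x+y+z)-\phi(x+y)-\phi(x+z)-\phi(y+z)+\phi(x)+\phi(y)+\phi(z)=0$; $\{\!\{\beta\}\!\}(v)=\beta(v,v)$, $\lambda(\phi)(v,w)=\phi(v+w)-\phi(v)-\phi(w)$. A form ring is $(R,V,\beta,\Phi)$ with $\beta$ admissible and $\Phi\le\mathrm{Quad}_0$ a subgroup closed under all $\phi\mapsto\phi[r]$, with $\{\!\{M\}\!\}\subseteq\Phi$ and $\lambda(\Phi)\subseteq M$. A code of Type $\rho$ is a left submodule $C\le V^N$ with $C=\{x:\sum_i\beta(x_i,c_i)=0\ \forall c\in C\}$ and $\sum_i\phi(c_i)=0$ for all $c\in C,\phi\in\Phi$. *)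

From HB Require Import structures.
From mathcomp Require Import all_boot all_order all_algebra.
From mathcomp Require Import ring.
Set Implicit Arguments. Unset Strict Implicit. Unset Printing Implicit Defensive.
Import Order.TTheory GRing.Theory Num.Theory.
Local Open Scope ring_scope.

(* Q/Z is represented by rat modulo Z: a value in Q/Z is given by any   *)
(* rational representative, and equality in Q/Z is congruence mod Z.    *)
Definition eqQZ (x y : rat) : Prop := (x - y) \is a Num.int.
Notation "x =QZ y" := (eqQZ x y) (at level 70, no associativity).

Section General.
Variables (R : nzRingType) (V : lmodType R).

Definition biadditive (beta : V -> V -> rat) : Prop :=
  (forall v v' w, beta (v + v') w =QZ beta v w + beta v' w) /\
  (forall v w w', beta v (w + w') =QZ beta v w + beta v w').

Definition homQZ (g : V -> rat) : Prop :=
  forall v w, g (v + w) =QZ g v + g w.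

Definition beta_r (beta : V -> V -> rat) (r : R) : V -> V -> rat :=
  fun v w => beta v (r *: w).

Definition admissible (beta : V -> V -> rat) : Prop :=
  biadditive beta /\
  (* v |-> beta(v,.) is an isomorphism V -> Hom(V,Q/Z) *)
  (forall v v', (forall w, beta v w =QZ beta v' w) -> v = v') /\
  (forall g, homQZ g -> exists v, forall w, beta v w =QZ g w) /\
  (* M = {beta_r} is closed under transposition *)
  (forall r, exists s, forall v w, beta_r beta r w v =QZ beta_r beta s v w) /\
  (* r |-> beta_r is injective (hence bijective onto M) *)
  (forall r s, (forall v w, beta_r beta r v w =QZ beta_r beta s v w) -> r = s).

Definition is_J (beta : V -> V -> rat) (J : R -> R) : Prop :=
  forall r v w, beta (r *: v) w =QZ beta v (J r *: w).

Definition Quad0 (phi : V -> rat) : Prop :=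
  phi 0 =QZ 0 /\
  forall x y z, phi (x + y + z) - phi (x + y) - phi (x + z) - phi (y + z)
                + phi x + phi y + phi z =QZ 0.

Definition diag_form (beta : V -> V -> rat) : V -> rat := fun v => beta v v.

Definition lambdaQ (phi : V -> rat) : V -> V -> rat :=
  fun v w => phi (v + w) - phi v - phi w.

Definition shiftQ (phi : V -> rat) (r : R) : V -> rat := fun v => phi (r *: v).

(* A form ring (R, V, beta, Phi); Phi is a set of maps V -> Q/Z, encoded as
   a predicate on rational-valued maps that respects equality in Q/Z. *)
Definition form_ring (beta : V -> V -> rat) (Phi : (V -> rat) -> Prop) : Prop :=
  admissible beta /\
  (forall phi psi, (forall v, phi v =QZ psi v) -> Phi phi -> Phi psi) /\
  (* Phi is a subgroup of Quad_0(V, Q/Z) *)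
  Phi (fun _ => 0) /\
  (forall phi psi, Phi phi -> Phi psi -> Phi (fun v => phi v - psi v)) /\
  (forall phi, Phi phi -> Quad0 phi) /\
  (forall phi r, Phi phi -> Phi (shiftQ phi r)) /\
  (forall r, Phi (diag_form (beta_r beta r))) /\
  (forall phi, Phi phi -> exists r, forall v w, lambdaQ phi v w =QZ beta_r beta r v w).

Definition left_submodule (N : nat) (C : {ffun 'I_N -> V} -> Prop) : Prop :=
  C [ffun _ => 0] /\
  (forall x y, C x -> C y -> C [ffun i => x i - y i]) /\
  (forall (r : R) x, C x -> C [ffun i => r *: x i]).

Definition code_of_type (beta : V -> V -> rat) (Phi : (V -> rat) -> Prop)
  (N : nat) (C : {ffun 'I_N -> V} -> Prop) : Prop :=
  left_submodule C /\
  (forall x, C x <-> (forall c, C c -> \sum_(i < N) beta (x i) (c i) =QZ 0)) /\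
  (forall c phi, C c -> Phi phi -> \sum_(i < N) phi (c i) =QZ 0).

End General.

(* The ring F + F u with u^2 = 0 and u a = (s a) u, s a ring morphism   *)
(* of F.  An element (a, b) stands for a + b u.                         *)
Definition skew (F : fieldType) (s : {rmorphism F -> F}) : Type := (F * F)%type.

Section Skew.
Variables (F : fieldType) (s : {rmorphism F -> F}).
Local Notation skew := (skew s).
HB.instance Definition _ := GRing.Zmodule.on skew.

Definition skew_one : skew := (1, 0).
Definition skew_mul (x y : skew) : skew :=
  (x.1 * y.1, x.1 * y.2 + x.2 * s y.1).

Lemma skew_mulA : associative skew_mul.
Proof.
move=> [a b] [c d] [e g]; rewrite /skew_mul /= rmorphM.
congr pair; first exact: mulrA.
by rewrite mulrDr mulrDl !mulrA !addrA.
Qed.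
Lemma skew_mul1r : left_id skew_one skew_mul.
Proof. by move=> [a b]; rewrite /skew_mul /= mul1r mul0r addr0 mul1r. Qed.
Lemma skew_mulr1 : right_id skew_one skew_mul.
Proof. by move=> [a b]; rewrite /skew_mul /= mulr1 mulr0 rmorph1 mulr1 add0r. Qed.
Lemma skew_mulDl : left_distributive skew_mul +%R.
Proof.
move=> [a b] [c d] [e g]; rewrite /skew_mul /=; congr pair; first exact: mulrDl.
by rewrite !mulrDl -!addrA; congr (_ + _); rewrite !addrA; congr (_ + _); rewrite addrC.
Qed.
Lemma skew_mulDr : right_distributive skew_mul +%R.
Proof.
move=> [a b] [c d] [e g]; rewrite /skew_mul /= rmorphD; congr pair; first exact: mulrDr.
by rewrite !mulrDr -!addrA; congr (_ + _); rewrite !addrA; congr (_ + _); rewrite addrC.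
Qed.
Lemma skew_oner_neq0 : skew_one != 0.
Proof. by apply/negP => /eqP [] /eqP; rewrite oner_eq0. Qed.

HB.instance Definition _ := GRing.Zmodule_isNzRing.Build skew
  skew_mulA skew_mul1r skew_mulr1 skew_mulDl skew_mulDr skew_oner_neq0.

Definition skewE (a b : F) : skew := (a, b).
End Skew.

HB.instance Definition _ (F : finFieldType) (s : {rmorphism F -> F}) :=
  Finite.on (skew s).

Section Specific.
Variables (p f : nat) (F : finFieldType) (s : {rmorphism F -> F}).

(* (1/p) x in Q/Z for x in the prime field F_p of F (identified with Z/pZ);
   the representative is k/p with 0 <= k < p and k%:R = x. *)
Definition ofFp (x : F) : rat :=
  if [pick k : 'I_p | (k%:R : F) == x] is Some k then (k%:Q / p%:Q) else 0.

(* trace F_{q^2} -> F_p, with q = p^f *)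
Definition trF (x : F) : F := \sum_(i < 2 * f) x ^+ (p ^ i).
(* trace F_q -> F_p *)
Definition trFq (x : F) : F := \sum_(i < f) x ^+ (p ^ i).

Local Notation R := (skew s).
Local Notation V := (R^o).

Definition beta_rho (v w : V) : rat :=
  ofFp (trF (w.1 * v.2 - v.1 * w.2)).

Definition phi0 (v : V) : rat := ofFp (trFq (v.1 * v.1 ^+ (p ^ f))).

(* Phi = the subgroup generated by the phi_0[r], r in R *)
Definition Phi_rho (phi : V -> rat) : Prop :=
  exists l : seq (R * int),
    forall v, phi v =QZ \sum_(t <- l) (t.2)%:~R * shiftQ phi0 t.1 v.

Definition J_rho (x : R) : R := (x.1, - x.2 ^+ (p ^ f)).

Definition bar_rho (x : R) : R := (x.1 ^+ (p ^ f), - x.2).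

Definition herm_dual (N : nat) (C : {ffun 'I_N -> R} -> Prop)
  (x : {ffun 'I_N -> R}) : Prop :=
  forall c, C c -> \sum_(i < N) x i * bar_rho (c i) = 0.

End Specific.

Notation regskew s := (GRing.regular (skew s)).

From Pilot Require Import Defs.
From HB Require Import structures.
From mathcomp Require Import all_boot all_order all_algebra.
From mathcomp Require Import finfield ring zify.
Set Implicit Arguments. Unset Strict Implicit. Unset Printing Implicit Defensive.
Import Order.TTheory GRing.Theory Num.Theory.
Local Open Scope ring_scope.

(* Everything rests on the additive character chi(x) = (1/p) Tr_{F/F_p}(x) of
   F = F_{q^2}.  The trace is a nonzero polynomial of degree < #|F|, so chi is
   nondegenerate; an additive map F -> Q/Z is fixed by its values on an
   F_p-basis, which lie in (1/p)Z/Z, so there are #|F| of them and all have the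
   form x |-> chi(c x).  Now beta(v, w) = chi((v * bar w).2), which gives
   admissibility, and, since C is a left module, beta-orthogonality to C is
   Hermitian orthogonality.  With N(a) = a a^q, phi0[r](v) is (1/p) Tr_{F_q/F_p}
   of N(r.1 v.1), whose polar form is chi(N(r.1) v.1 w.1^q): this puts
   lambda(Phi) inside M and makes Phi quadratic.  Finally, on a Hermitian
   self-dual code the sum of the N(c_i.1) is the first component of
   sum_i c_i bar(c_i) = 0, so every phi in Phi sums to zero over a codeword. *)

(** * Arithmetic in Q/Z *)

Section QZ.
Implicit Types x y z a b c d : rat.

Lemma eqQZ_refl x : x =QZ x.
Proof. by rewrite /eqQZ subrr. Qed.

Lemma eqQZ_eq x y : x = y -> x =QZ y.
Proof. by move=> ->; apply: eqQZ_refl. Qed.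

Lemma eqQZ_sym x y : x =QZ y -> y =QZ x.
Proof. by rewrite /eqQZ -opprB rpredN. Qed.

Lemma eqQZ_trans x y z : x =QZ y -> y =QZ z -> x =QZ z.
Proof. by rewrite /eqQZ => hxy /(rpredD hxy); rewrite addrA subrK. Qed.

Lemma eqQZ0 x : x =QZ 0 <-> x \is a Num.int.
Proof. by rewrite /eqQZ subr0. Qed.

Lemma eqQZ_add a b c d : a =QZ b -> c =QZ d -> a + c =QZ b + d.
Proof. by rewrite /eqQZ => hab /(rpredD hab); rewrite opprD addrACA. Qed.

Lemma eqQZ_opp a b : a =QZ b -> - a =QZ - b.
Proof. by rewrite /eqQZ -opprD rpredN. Qed.

Lemma eqQZ_sub a b c d : a =QZ b -> c =QZ d -> a - c =QZ b - d.
Proof. by move=> hab /eqQZ_opp; apply: eqQZ_add. Qed.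

Lemma eqQZ_mulz (k : int) a b : a =QZ b -> k%:~R * a =QZ k%:~R * b.
Proof. by rewrite /eqQZ -mulrBr; apply: rpredM; apply: intr_int. Qed.

Lemma eqQZ_sum (I : Type) (r : seq I) (P : pred I) (g h : I -> rat) :
  (forall i, P i -> g i =QZ h i) ->
  \sum_(i <- r | P i) g i =QZ \sum_(i <- r | P i) h i.
Proof.
move=> gh; elim/big_ind2: _ => [|? ? ? ?|//]; [exact: eqQZ_refl | exact: eqQZ_add].
Qed.

Lemma eqQZ_sum0 (I : Type) (r : seq I) (P : pred I) (g : I -> rat) :
  (forall i, P i -> g i =QZ 0) -> \sum_(i <- r | P i) g i =QZ 0.
Proof.
move=> g0; apply: eqQZ_trans (@eqQZ_sum _ r P g (fun=> 0) g0) _.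
by rewrite big1 //; apply: eqQZ_refl.
Qed.

End QZ.

Section AdditiveQZ.
Variable T : zmodType.

Definition additiveQZ (d : T -> rat) := forall x y, d (x + y) =QZ d x + d y.

Lemma additiveQZ_diff (d1 d2 : T -> rat) :
  additiveQZ d1 -> additiveQZ d2 -> additiveQZ (fun x => d1 x - d2 x).
Proof.
move=> h1 h2 x y; apply: eqQZ_trans (eqQZ_sub (h1 x y) (h2 x y)) _.
by apply: eqQZ_eq; rewrite opprD addrACA.
Qed.

Variables (d : T -> rat) (d_add : additiveQZ d).

Lemma additiveQZ0 : d 0 =QZ 0.
Proof.
have := d_add 0 0; rewrite addr0 /eqQZ opprD addrA subrr add0r rpredN.
by move/eqQZ0.
Qed.

Lemma additiveQZN x : d (- x) =QZ - d x.
Proof.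
have := eqQZ_trans (eqQZ_sym (d_add x (- x))) (eqQZ_eq (congr1 d (subrr x))).
by move/eqQZ_trans/(_ additiveQZ0); rewrite /eqQZ opprK subr0 addrC.
Qed.

Lemma additiveQZB x y : d (x - y) =QZ d x - d y.
Proof. exact: eqQZ_trans (d_add _ _) (eqQZ_add (eqQZ_refl _) (additiveQZN y)). Qed.

Lemma additiveQZ_sum (I : Type) (r : seq I) (P : pred I) (g : I -> T) :
  d (\sum_(i <- r | P i) g i) =QZ \sum_(i <- r | P i) d (g i).
Proof.
elim/big_rec2: _ => [|i y x _ IH]; first exact: additiveQZ0.
exact: eqQZ_trans (d_add _ _) (eqQZ_add (eqQZ_refl _) IH).
Qed.

Lemma additiveQZMn x n : d (x *+ n) =QZ d x *+ n.
Proof.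
elim: n => [|n IH]; first by rewrite !mulr0n; apply: additiveQZ0.
by rewrite !mulrS; apply: eqQZ_trans (d_add _ _) (eqQZ_add (eqQZ_refl _) IH).
Qed.

Lemma additiveQZMz x (k : int) : d (x *~ k) =QZ k%:~R * d x.
Proof.
case: k => n; first by rewrite -pmulrn mulr_natl; apply: additiveQZMn.
rewrite NegzE mulrNz intrN mulNr -pmulrn mulr_natl.
exact: eqQZ_trans (additiveQZN _) (eqQZ_opp (additiveQZMn _ _)).
Qed.

Lemma additiveQZ_eq0_span n (e : 'I_n -> T) :
  (forall x, exists k : 'I_n -> nat, x = \sum_j e j *+ k j) ->
  (forall j, d (e j) =QZ 0) -> forall x, d x =QZ 0.
Proof.
move=> span de0 x; have [k ->] := span x.
apply: eqQZ_trans (additiveQZ_sum _ _ _) _; apply: eqQZ_sum0 => j _.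
apply: eqQZ_trans (additiveQZMn _ _) _; apply/eqQZ0/rpredMn.
exact/eqQZ0.
Qed.

End AdditiveQZ.

Section Forms.
Variables (R : nzRingType) (V : lmodType R).

(* The degree-three condition of [Quad0] is additivity of the polar form in its
   first argument. *)
Lemma Quad0_of_polar (phi : V -> rat) :
  biadditive (lambdaQ phi) -> Quad0 phi.
Proof.
move=> [addl _]; split.
  have := additiveQZ0 (fun x y => addl x y 0).
  by rewrite /lambdaQ addr0 subrr sub0r => /eqQZ_opp; rewrite opprK oppr0.
move=> x y z.
have := eqQZ_sub (addl x y z) (eqQZ_refl (lambdaQ phi x z + lambdaQ phi y z)).
by rewrite subrr /lambdaQ; congr eqQZ; rewrite !addrA; ring.
Qed.

Lemma lambdaQ_shift (phi : V -> rat) r v w :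
  lambdaQ (shiftQ phi r) v w = lambdaQ phi (r *: v) (r *: w).
Proof. by rewrite /lambdaQ /shiftQ scalerDr. Qed.

Lemma biadditive_eqQZ (b1 b2 : V -> V -> rat) :
  (forall v w, b1 v w =QZ b2 v w) -> biadditive b2 -> biadditive b1.
Proof.
move=> b12 [addl addr]; split=> v v' w.
  apply: eqQZ_trans (b12 _ _) (eqQZ_trans (addl _ _ _) _).
  exact/eqQZ_sym/eqQZ_add.
apply: eqQZ_trans (b12 _ _) (eqQZ_trans (addr _ _ _) _).
exact/eqQZ_sym/eqQZ_add.
Qed.

Lemma biadditive_beta_r (beta : V -> V -> rat) r :
  biadditive beta -> biadditive (beta_r beta r).
Proof.
move=> [addl addr]; split=> v v' w; rewrite /beta_r ?scalerDr.
  exact: addl.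
exact: addr.
Qed.

Lemma lambdaQ_lincomb (I : Type) (l : seq I) (k : I -> int) (g : I -> V -> rat)
    (phi : V -> rat) :
  (forall v, phi v =QZ \sum_(t <- l) (k t)%:~R * g t v) ->
  forall v w, lambdaQ phi v w =QZ \sum_(t <- l) (k t)%:~R * lambdaQ (g t) v w.
Proof.
move=> phiE v w; apply: eqQZ_trans (eqQZ_sub (eqQZ_sub (phiE _) (phiE _)) (phiE _)) _.
by apply: eqQZ_eq; rewrite -!sumrB; apply: eq_bigr => t _; rewrite /lambdaQ !mulrBr.
Qed.

End Forms.

(** * Additive maps of a finite field of characteristic p into Q/Z *)

Section PrimeChar.
Variables (p : nat) (F : finFieldType).
Hypothesis pch : p \in [pchar F].

Let p_gt0 : (0 < p)%N. Proof. exact/prime_gt0/(pcharf_prime pch). Qed.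
Let p_neq0 : (p%:R : rat) != 0. Proof. by rewrite pnatr_eq0 -lt0n. Qed.

Definition in_Fp (t : F) := exists z : int, t = z%:~R.

Lemma natr_inj_pchar k l : (k < p)%N -> (l < p)%N -> (k%:R : F) = l%:R -> k = l.
Proof.
wlog le_kl: k l / (k <= l)%N => [W hk hl e|hk hl e].
  by case: (leqP k l) => [/W|/ltnW/W/(_ hl hk (esym e))]; [apply | move->].
have : (p %| l - k)%N by rewrite (dvdn_pcharf pch) natrB // e subrr.
by case/dvdnP=> [[|m]] hm; lia.
Qed.

(* [X^p - X] has no room for roots besides 0, 1, ..., p - 1. *)
Lemma in_Fp_frobenius_fixed t : t ^+ p = t -> in_Fp t.
Proof.
move=> tp; have [/mapP[k _ ->]|t_new] := boolP (t \in [seq k%:R | k <- iota 0 p]).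
  by exists k.
have p_gt1 : (1 < p)%N by apply/prime_gt1/(pcharf_prime pch).
have size_P : size ('X^p - 'X : {poly F}) = p.+1.
  by rewrite size_polyDl size_polyXn // size_polyN size_polyX.
suff: (p.+1 <= p)%N by rewrite ltnn.
have := @max_poly_roots F ('X^p - 'X) (t :: [seq k%:R | k <- iota 0 p]).
rewrite size_P /= size_map size_iota; apply.
- by rewrite -size_poly_eq0 size_P.
- rewrite /root !hornerE tp subrr eqxx /=; apply/allP => _ /mapP[k _ ->].
  by rewrite /root !hornerE -(pFrobenius_autE pch) pFrobenius_aut_nat subrr.
- rewrite t_new /= map_inj_in_uniq ?iota_uniq // => k l.
  by rewrite !mem_iota /= !add0n; apply: natr_inj_pchar.
Qed.

Lemma ofFp_int (z : int) : ofFp p (z%:~R : F) =QZ z%:~R / p%:R.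
Proof.
rewrite /ofFp; case: pickP => [k /eqP kz | no_k].
  have /dvdzP[m km] : (p %| k%:Z - z)%Z.
    by rewrite (dvdz_pcharf pch) intrB -pmulrn kz subrr.
  by rewrite /eqQZ -[k%:Q]/(k%:Z%:~R) -mulrBl -intrB km intrM -pmulrn mulfK.
have lt_mod : (`|(z %% p)%Z|%N < p)%N.
  by rewrite -ltz_nat gez0_abs ?modz_ge0 ?ltz_pmod // ?ltz_nat // gt_eqF ?ltz_nat.
case/negP: (no_k (Ordinal lt_mod)).
rewrite /= pmulrn gez0_abs ?modz_ge0 ?gt_eqF ?ltz_nat //.
by rewrite /modz intrB intrM -pmulrn (pcharf0 pch) mulr0 subr0.
Qed.

Lemma ofFp0 : ofFp p (0 : F) =QZ 0.
Proof. by have := ofFp_int 0; rewrite mul0r. Qed.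

Lemma ofFp_add a b : in_Fp a -> in_Fp b -> ofFp p (a + b) =QZ ofFp p a + ofFp p b.
Proof.
move=> [x ->] [y ->]; rewrite -intrD; apply: eqQZ_trans (ofFp_int _) _.
apply: eqQZ_sym; apply: eqQZ_trans (eqQZ_add (ofFp_int x) (ofFp_int y)) _.
by apply: eqQZ_eq; rewrite intrD mulrDl.
Qed.

Lemma ofFp_eq0 a : in_Fp a -> ofFp p a =QZ 0 -> a = 0.
Proof.
move=> [z ->] /(eqQZ_trans (eqQZ_sym (ofFp_int z)))/eqQZ0/intrP[m zm].
have -> : z = (m * p%:Z)%R by apply: (@intr_inj rat); rewrite intrM -zm -pmulrn divfK.
by rewrite intrM -pmulrn (pcharf0 pch) mulr0.
Qed.

Lemma residue_exists (r : rat) : r *+ p \is a Num.int ->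
  exists k : 'I_p, r =QZ k%:R / p%:R.
Proof.
case/intrP=> z rz.
have lt_mod : (`|(z %% p)%Z|%N < p)%N.
  by rewrite -ltz_nat gez0_abs ?modz_ge0 ?ltz_pmod // ?ltz_nat // gt_eqF ?ltz_nat.
exists (Ordinal lt_mod); rewrite /eqQZ /= pmulrn gez0_abs ?modz_ge0 ?gt_eqF ?ltz_nat //.
have -> : r = z%:~R / p%:R by apply: (mulIf p_neq0); rewrite divfK // mulr_natr.
by rewrite /modz intrB intrM -pmulrn -mulrBl opprB addrC subrK mulfK.
Qed.

Lemma additiveQZ_pchar (d : F -> rat) x : additiveQZ d -> d x *+ p \is a Num.int.
Proof.
move=> d_add; apply/eqQZ0/(eqQZ_trans (eqQZ_sym (additiveQZMn d_add x p))).
by rewrite (mulrn_pchar pch); apply: additiveQZ0.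
Qed.

Lemma pchar_span : exists n (e : 'I_n -> F), #|F| = (p ^ n)%N /\
  forall x, exists k : 'I_n -> nat, x = \sum_j e j *+ k j.
Proof.
pose L := pPrimeCharType pch; pose B := vbasis (fullv : {vspace L}).
exists (\dim (fullv : {vspace L})), (fun j => B`_j); split.
  by rewrite pprimeChar_dimf; apply: card_pprimeChar.
move=> x; exists (fun j => coord B j (x : L) : nat).
by rewrite {1}(coord_vbasis (memvf (x : L))); apply: eq_bigr => j _; rewrite -mulr_natl.
Qed.

Lemma additiveQZ_char_onto (chi : F -> rat) :
  additiveQZ chi -> (forall c, (forall x, chi (c * x) =QZ 0) -> c = 0) ->
  forall g, additiveQZ g -> exists c, forall x, chi (c * x) =QZ g x.
Proof.
move=> chi_add chi_nondeg g g_add.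
have [n [e [cardF span]]] := pchar_span.
have chiM c : additiveQZ (fun x => chi (c * x)).
  by move=> x y; rewrite mulrDr; apply: chi_add.
pose res (r : rat) : 'I_p :=
  odflt (Ordinal p_gt0) [pick k : 'I_p | r - k%:R / p%:R \is a Num.int].
have resP (d : F -> rat) (x : F) : additiveQZ d -> d x =QZ (res (d x))%:R / p%:R.
  move=> d_add; rewrite /res; case: pickP => [k // | none].
  have [k dk] := residue_exists (additiveQZ_pchar x d_add).
  by move: (none k) => /=; rewrite dk.
have res_eq (d1 d2 : F -> rat) (x y : F) : additiveQZ d1 -> additiveQZ d2 ->
    res (d1 x) = res (d2 y) -> d1 x - d2 y =QZ 0.
  move=> d1_add d2_add e_res.
  apply: eqQZ_trans (eqQZ_sub (resP _ x d1_add) (resP _ y d2_add)) _.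
  by rewrite e_res subrr; apply: eqQZ_refl.
pose Psi c : {ffun 'I_n -> 'I_p} := [ffun j => res (chi (c * e j))].
have Psi_inj : injective Psi.
  move=> c c' /ffunP Pcc'; apply/eqP; rewrite -subr_eq0; apply/eqP/chi_nondeg => x.
  rewrite mulrBl; apply: eqQZ_trans (additiveQZB chi_add _ _) _.
  apply: (additiveQZ_eq0_span (additiveQZ_diff (chiM c) (chiM c')) span) => j.
  by apply: res_eq => //; move: (Pcc' j); rewrite !ffunE.
have /codomP[c Psi_c] : [ffun j => res (g (e j))] \in codom Psi.
  by apply: inj_card_onto => //; rewrite card_ffun !card_ord cardF.
exists c => x; apply/eqQZ_sym/(eqQZ0 (g x - chi (c * x))).
apply: (additiveQZ_eq0_span (additiveQZ_diff g_add (chiM c)) span) => j.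
by apply: res_eq => //; move/ffunP/(_ j): Psi_c; rewrite !ffunE.
Qed.

End PrimeChar.

(** * The form ring over F_{q^2} + F_{q^2} u *)

Section Rho.
Variables (p f : nat) (F : finFieldType) (s : {rmorphism F -> F}).
Hypotheses (p_prime : prime p) (f_gt0 : (0 < f)%N) (cardF : #|F| = ((p ^ f) ^ 2)%N)
  (sE : forall x : F, s x = x ^+ (p ^ f)).
Implicit Types x y z : F.

Lemma pchar_F : p \in [pchar F].
Proof. by apply: (@card_finPcharP F p (f * 2)) => //; rewrite expnM. Qed.

Lemma sK : involutive s.
Proof.
move=> x; rewrite !sE -exprM.
have -> : (p ^ f * p ^ f = #|F|)%N by rewrite cardF expnS expn1.
exact: expf_card.
Qed.

Lemma exprDp i (x y : F) : (x + y) ^+ (p ^ i) = x ^+ (p ^ i) + y ^+ (p ^ i).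
Proof. by apply: exprDn_pchar; rewrite pnatX pnatE // pchar_F. Qed.

Lemma expr0p i : (0 : F) ^+ (p ^ i) = 0.
Proof. by rewrite expr0n expn_eq0 eqn0Ngt prime_gt0. Qed.

Lemma trFD x y : trF p f (x + y) = trF p f x + trF p f y.
Proof. by rewrite /trF -big_split; apply: eq_bigr => i _; apply: exprDp. Qed.

Lemma trFqD x y : trFq p f (x + y) = trFq p f x + trFq p f y.
Proof. by rewrite /trFq -big_split; apply: eq_bigr => i _; apply: exprDp. Qed.

Lemma trFq0 : trFq p f (0 : F) = 0.
Proof. by rewrite /trFq big1 // => i _; apply: expr0p. Qed.

Lemma trF_split x : trF p f x = trFq p f x + trFq p f (s x).
Proof.
rewrite /trF /trFq mul2n -addnn big_split_ord /=; congr (_ + _).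
by apply: eq_bigr => i _; rewrite sE -exprM -expnD.
Qed.

Lemma frobenius_trace_fixed m x : (0 < m)%N -> x ^+ (p ^ m) = x ->
  (\sum_(i < m) x ^+ (p ^ i)) ^+ p = \sum_(i < m) x ^+ (p ^ i).
Proof.
case: m => // m _ xpm; rewrite -(pFrobenius_autE pchar_F) rmorph_sum /=.
under eq_bigr do rewrite pFrobenius_autE -exprM -expnSr.
by rewrite big_ord_recr big_ord_recl /= xpm expn0 expr1 addrC.
Qed.

Lemma trF_Fp x : in_Fp (trF p f x).
Proof.
apply/(in_Fp_frobenius_fixed pchar_F)/frobenius_trace_fixed.
  by rewrite muln_gt0.
by rewrite mulnC expnM -cardF expf_card.
Qed.

Lemma trFq_Fp z : s z = z -> in_Fp (trFq p f z).
Proof.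
by rewrite sE => zq; apply/(in_Fp_frobenius_fixed pchar_F)/frobenius_trace_fixed.
Qed.

(* [trF] is evaluation of a nonzero polynomial of degree p^(2f-1) < #|F|. *)
Lemma trF_neq0 : exists w : F, trF p f w != 0.
Proof.
have [w ? | trF0] := pickP (fun w : F => trF p f w != 0); first by exists w.
exfalso; set m := (2 * f).-1.
have m_eq : (2 * f)%N = m.+1 by rewrite prednK // muln_gt0.
pose P : {poly F} := \sum_(i < m.+1) 'X^(p ^ i).
have P_root w : root P w.
  rewrite /root; suff -> : P.[w] = trF p f w by apply: negbFE (trF0 w).
  by rewrite horner_sum /trF m_eq; apply: eq_bigr => i _; rewrite hornerXn.
have P_neq0 : P != 0.
  apply/eqP => /(congr1 (fun q : {poly F} => q`_(p ^ m))) /eqP.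
  rewrite coef0 coef_sum (bigD1 ord_max) //= coefXn eqxx big1 ?addr0 ?oner_eq0 //.
  move=> i i_ne; rewrite coefXn eqn_exp2l ?prime_gt1 // eq_sym.
  by have /negbTE-> : (i : nat) != m := i_ne.
have size_P : (size P <= (p ^ m).+1)%N.
  apply: leq_trans (size_sum _ _ _) _; apply/bigmax_leqP => i _.
  by rewrite size_polyXn ltnS leq_pexp2l ?prime_gt0 // -ltnS.
have := max_poly_roots P_neq0 (introT allP (fun w _ => P_root w)) (enum_uniq F).
rewrite -cardE cardF -expnM mulnC m_eq expnS => /(leq_trans)/(_ size_P).
have : (0 < p ^ m)%N by rewrite expn_gt0 prime_gt0.
have : (1 < p)%N by apply: prime_gt1.
move: (p ^ m)%N => y; nia.
Qed.

Definition chi x := ofFp p (trF p f x).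
Definition psi x := ofFp p (trFq p f x).

Lemma chi_additive : additiveQZ chi.
Proof. by move=> x y; rewrite /chi trFD; apply: (ofFp_add pchar_F); apply: trF_Fp. Qed.

Lemma chi_nondeg c : (forall x, chi (c * x) =QZ 0) -> c = 0.
Proof.
move=> c_triv; apply/eqP/negPn/negP => c_neq0.
have [w] := trF_neq0; apply/negP/negPn/eqP.
by apply: (ofFp_eq0 pchar_F (trF_Fp _)); rewrite -(divfK c_neq0 w) mulrC; apply: c_triv.
Qed.

Lemma chi_onto (g : F -> rat) : additiveQZ g -> exists c, forall x, chi (c * x) =QZ g x.
Proof.
move=> g_add; apply: (additiveQZ_char_onto pchar_F chi_additive) => //.
exact: chi_nondeg.
Qed.

Lemma psi_add x y : s x = x -> s y = y -> psi (x + y) =QZ psi x + psi y.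
Proof.
by move=> xq yq; rewrite /psi trFqD; apply: (ofFp_add pchar_F); apply: trFq_Fp.
Qed.

Lemma psi0 : psi 0 =QZ 0.
Proof. by rewrite /psi trFq0; apply: ofFp0 pchar_F. Qed.

Lemma psi_sum (I : Type) (r : seq I) (P : pred I) (g : I -> F) :
  (forall i, P i -> s (g i) = g i) ->
  psi (\sum_(i <- r | P i) g i) =QZ \sum_(i <- r | P i) psi (g i).
Proof.
move=> gq; elim: r => [|i r IH]; first by rewrite !big_nil; apply: psi0.
rewrite !big_cons; case: ifP => // Pi; apply: eqQZ_trans (psi_add (gq i Pi) _) _.
  by rewrite rmorph_sum; apply: eq_bigr.
exact: eqQZ_add (eqQZ_refl _) IH.
Qed.

Lemma psi_trace x : psi (x + s x) = chi x.
Proof. by rewrite /psi /chi trFqD trF_split. Qed.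

Local Notation R := (Defs.skew s).
Local Notation V := (regskew s).
Local Notation beta := (@beta_rho p f F s).

Lemma betaE (v w : V) : beta v w = chi (w.1 * v.2 - v.1 * w.2).
Proof. by []. Qed.

Lemma beta_antisym (v w : V) : beta v w =QZ beta w (- v).
Proof. by apply: eqQZ_eq; rewrite !betaE; congr chi; rewrite /=; ring. Qed.

Lemma trF_s x : trF p f (s x) = trF p f x.
Proof. by rewrite !trF_split sK addrC. Qed.

Lemma beta_J : is_J beta (@J_rho p f F s).
Proof.
move=> r v w; apply: eqQZ_eq; rewrite !betaE /J_rho /= -sE /chi.
have -> : r.1 * w.1 * v.2 - v.1 * (r.1 * w.2 + - s r.2 * s w.1)
    = (w.1 * r.1 * v.2 - r.1 * v.1 * w.2) + s (s v.1 * r.2 * w.1).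
  by rewrite !rmorphM sK; ring.
by rewrite [in RHS]trFD trF_s -trFD; congr (ofFp p (trF p f _)); ring.
Qed.

Lemma beta_biadditive : biadditive beta.
Proof.
by split=> v v' w; rewrite !betaE; apply: eqQZ_trans (chi_additive _ _);
  apply: eqQZ_eq; congr chi; rewrite /=; ring.
Qed.

Lemma beta_eq0l (x : V) : (forall w, beta x w =QZ 0) -> x = 0.
Proof.
move=> x_triv; have x2 : x.2 = 0.
  apply: chi_nondeg => y; have := x_triv ((y, 0) : R).
  by rewrite betaE /= mulr0 subr0 mulrC.
have x1 : - x.1 = 0.
  apply: chi_nondeg => y; have := x_triv ((0, y) : R).
  by rewrite betaE /= mul0r sub0r -mulNr.
by move: x1 x2; case: x {x_triv} => a b /= /eqP; rewrite oppr_eq0 => /eqP -> ->.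
Qed.

Lemma beta_eq0r (x : V) : (forall v, beta v x =QZ 0) -> x = 0.
Proof.
move=> x_triv; apply: beta_eq0l => w.
by have := beta_antisym (- w) x; rewrite opprK => /eqQZ_sym/eqQZ_trans; apply.
Qed.

Lemma beta_inj (v v' : V) : (forall w, beta v w =QZ beta v' w) -> v = v'.
Proof.
move=> vv'; apply/eqP; rewrite -subr_eq0; apply/eqP/beta_eq0l => w.
have beta_w_add : additiveQZ (beta^~ w) by move=> ? ?; apply: beta_biadditive.1.
apply: eqQZ_trans (additiveQZB beta_w_add _ _) _.
by have := vv' w; rewrite /eqQZ !subr0.
Qed.

Lemma pairD (a b c d : F) : ((a + c, b + d) : V) = ((a, b) : V) + ((c, d) : V).
Proof. by []. Qed.

Lemma beta_onto (g : V -> rat) : homQZ g -> exists v, forall w, beta v w =QZ g w.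
Proof.
move=> g_add.
have [c1 c1E] : exists c, forall x, chi (c * x) =QZ g ((x, 0) : V).
  apply: chi_onto => x y.
  by have := g_add ((x, 0) : V) ((y, 0) : V); rewrite -pairD addr0.
have [c2 c2E] : exists c, forall x, chi (c * x) =QZ g ((0, x) : V).
  apply: chi_onto => x y.
  by have := g_add ((0, x) : V) ((0, y) : V); rewrite -pairD addr0.
exists ((- c2, c1) : V) => w; rewrite betaE /=.
have -> : w.1 * c1 - - c2 * w.2 = c1 * w.1 + c2 * w.2 by ring.
apply: eqQZ_trans (chi_additive _ _) (eqQZ_trans (eqQZ_add (c1E _) (c2E _)) _).
have := g_add ((w.1, 0) : V) ((0, w.2) : V).
by rewrite -pairD addr0 add0r -surjective_pairing => /eqQZ_sym.
Qed.

Lemma beta_transpose (r : R) :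
  exists r' : R, forall v w : V, beta_r beta r w v =QZ beta_r beta r' v w.
Proof.
exists (- J_rho p f r) => v w; rewrite /beta_r.
apply: eqQZ_trans (beta_antisym _ _) (eqQZ_trans (beta_J _ _ _) _).
by rewrite scalerN scaleNr; apply: eqQZ_refl.
Qed.

Lemma beta_r_inj (r r' : R) :
  (forall v w : V, beta_r beta r v w =QZ beta_r beta r' v w) -> r = r'.
Proof.
move=> rr'; apply/eqP; rewrite -subr_eq0; apply/eqP/beta_eq0r => v.
have beta_v_add : additiveQZ (beta v) by move=> ? ?; apply: beta_biadditive.2.
apply: eqQZ_trans (additiveQZB beta_v_add _ _) _.
by have := rr' v 1; rewrite /eqQZ /beta_r !subr0 [_ *: 1]mulr1 [r' *: _]mulr1.
Qed.

Lemma beta_admissible : admissible beta.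
Proof.
split; first exact: beta_biadditive.
split; first exact: beta_inj.
split; first exact: beta_onto.
split; first exact: beta_transpose.
exact: beta_r_inj.
Qed.

Definition Nm a := a * s a.

Lemma Nm_fixed a : s (Nm a) = Nm a.
Proof. by rewrite /Nm rmorphM sK mulrC. Qed.

Lemma phi0E (v : V) : phi0 p f v = psi (Nm v.1).
Proof. by rewrite /phi0 /psi /Nm sE. Qed.

(* Nm (a + b) - Nm a - Nm b = t + s t with t = a * s b; [psi] is additive on
   the fixed field of [s], and [psi (t + s t) = chi t]. *)
Lemma lambda_phi0 (v w : V) : lambdaQ (@phi0 p f F s) v w =QZ chi (v.1 * s w.1).
Proof.
rewrite /lambdaQ !phi0E /= -psi_trace.
have -> : Nm (v.1 + w.1) = Nm v.1 + Nm w.1 + (v.1 * s w.1 + s (v.1 * s w.1)).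
  by rewrite /Nm !rmorphD !rmorphM sK; ring.
have trq : s (v.1 * s w.1 + s (v.1 * s w.1)) = v.1 * s w.1 + s (v.1 * s w.1).
  by rewrite rmorphD sK addrC.
have Nmq : s (Nm v.1 + Nm w.1) = Nm v.1 + Nm w.1 by rewrite rmorphD !Nm_fixed.
apply: eqQZ_trans (eqQZ_sub (eqQZ_sub (psi_add Nmq trq) (eqQZ_refl _)) (eqQZ_refl _)) _.
apply: eqQZ_trans (eqQZ_sub (eqQZ_sub (eqQZ_add (psi_add (Nm_fixed _) (Nm_fixed _))
  (eqQZ_refl _)) (eqQZ_refl _)) (eqQZ_refl _)) _.
by apply: eqQZ_eq; ring.
Qed.

Local Notation Phi := (@Phi_rho p f F s).

Lemma Phi_lambda phi : Phi phi ->
  exists r : R, forall v w : V, lambdaQ phi v w =QZ beta_r beta r v w.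
Proof.
move=> [l phiE]; pose M := \sum_(t <- l) Nm t.1.1 *~ t.2.
exists ((0, - M) : R) => v w.
have lambdaE := @lambdaQ_lincomb _ _ _ l (fun t => t.2)
  (fun t => shiftQ (@phi0 p f F s) t.1) phi phiE v w.
apply: eqQZ_trans lambdaE _.
have -> : beta_r beta (0, - M) v w
    = chi (\sum_(t <- l) (Nm t.1.1 * (v.1 * s w.1)) *~ t.2).
  rewrite /beta_r betaE /=; congr chi; under eq_bigr do rewrite -mulrzAl.
  by rewrite -mulr_suml -/M; ring.
apply: eqQZ_sym.
have := additiveQZ_sum chi_additive l xpredT (fun t => (Nm t.1.1 * (v.1 * s w.1)) *~ t.2).
move/eqQZ_trans; apply; apply: eqQZ_sum => t _.
have := additiveQZMz chi_additive (Nm t.1.1 * (v.1 * s w.1)) t.2.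
move/eqQZ_trans; apply; apply: eqQZ_mulz.
rewrite lambdaQ_shift; apply: eqQZ_sym; apply: eqQZ_trans (lambda_phi0 _ _) (eqQZ_eq _).
by congr chi; rewrite /= rmorphM /Nm; ring.
Qed.

Lemma Phi_quad phi : Phi phi -> Quad0 phi.
Proof.
move=> /Phi_lambda[r lambdaE]; apply: Quad0_of_polar.
exact: biadditive_eqQZ lambdaE (biadditive_beta_r r beta_biadditive).
Qed.

Lemma Phi_resp phi psi : (forall v, phi v =QZ psi v) -> Phi phi -> Phi psi.
Proof.
move=> phi_psi [l phiE]; exists l => v.
exact: eqQZ_trans (eqQZ_sym (phi_psi v)) (phiE v).
Qed.

Lemma Phi0 : Phi (fun _ => 0).
Proof. by exists [::] => v; rewrite big_nil; apply: eqQZ_refl. Qed.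

Lemma PhiB phi psi : Phi phi -> Phi psi -> Phi (fun v => phi v - psi v).
Proof.
move=> [l1 phiE] [l2 psiE]; exists (l1 ++ map (fun t => (t.1, - t.2)) l2) => v.
rewrite big_cat big_map; apply: eqQZ_trans (eqQZ_sub (phiE v) (psiE v)) (eqQZ_eq _).
by rewrite -sumrN; congr (_ + _); apply: eq_bigr => t _; rewrite intrN mulNr.
Qed.

Lemma Phi_shift phi (r : R) : Phi phi -> Phi (shiftQ phi r).
Proof.
move=> [l phiE]; exists (map (fun t => (t.1 * r, t.2)) l) => v.
rewrite big_map; apply: eqQZ_trans (phiE _) (eqQZ_eq _).
by apply: eq_bigr => t _; rewrite /shiftQ scalerA.
Qed.

(* beta(v, r v) = - chi (r.2 * Nm v.1) is minus the polar form of [phi0] at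
   ((r.2, 0) v, v), that is - phi0[(r.2, 0) + 1] + phi0[(r.2, 0)] + phi0. *)
Lemma Phi_diag (r : R) : Phi (diag_form (beta_r beta r)).
Proof.
pose c : R := (r.2, 0).
exists [:: (c + 1, -1%R); (c, 1%R); (1, 1%R)] => v.
rewrite !big_cons big_nil /shiftQ scalerDl scale1r /=.
have -> : -1 * phi0 p f (c *: v + v) + (1 * phi0 p f (c *: v) + (1 * phi0 p f v + 0))
    = - lambdaQ (@phi0 p f F s) (c *: v) v.
  by rewrite /lambdaQ; ring.
apply: eqQZ_trans (eqQZ_sym (eqQZ_opp (lambda_phi0 _ _))).
apply: eqQZ_trans (additiveQZN chi_additive _).
by apply: eqQZ_eq; rewrite /diag_form /beta_r betaE; congr chi; rewrite /=; ring.
Qed.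

Lemma Phi_form_ring : form_ring beta Phi.
Proof.
split; first exact: beta_admissible.
split; first exact: Phi_resp.
split; first exact: Phi0.
split; first exact: PhiB.
split; first exact: Phi_quad.
split; first by move=> phi r; apply: Phi_shift.
split; first exact: Phi_diag.
exact: Phi_lambda.
Qed.

(** * Codes of Type rho are the Hermitian self-dual codes *)

Local Notation bar := (@bar_rho p f F s).

Lemma bar_mulr (r c : R) : bar (r * c) = bar c * bar r.
Proof. by rewrite /bar_rho -!sE /=; congr pair; rewrite /= ?rmorphM ?sK; ring. Qed.

Lemma beta_bar (x c : V) : beta x c = chi (((x : R) * bar c).2).
Proof. by rewrite betaE /bar_rho -sE /= sK; congr chi; ring. Qed.

Lemma sum_beta N (x c : {ffun 'I_N -> V}) :
  \sum_(i < N) beta (x i) (c i) =QZ chi ((\sum_(i < N) (x i : R) * bar (c i)).2).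
Proof.
rewrite (big_morph (fun y : R => y.2) (fun _ _ => erefl) erefl).
apply: eqQZ_sym; apply: eqQZ_trans (additiveQZ_sum chi_additive _ _ _) (eqQZ_eq _).
by apply: eq_bigr => i _; rewrite beta_bar.
Qed.

Lemma beta_orthogonal_herm_dual N (C : {ffun 'I_N -> V} -> Prop) :
  left_submodule C ->
  forall x : {ffun 'I_N -> V},
    (forall c, C c -> \sum_(i < N) beta (x i) (c i) =QZ 0) <-> @herm_dual p f F s N C x.
Proof.
move=> [_ [_ C_scale]] x; split=> [x_orth c Cc | x_dual c Cc].
  apply: beta_eq0l => v; rewrite beta_bar.
  have := eqQZ_trans (eqQZ_sym (sum_beta _ _)) (x_orth _ (C_scale (v : R) c Cc)).
  by rewrite mulr_suml; under eq_bigr do rewrite ffunE bar_mulr mulrA.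
apply: eqQZ_trans (sum_beta _ _) _; rewrite x_dual //.
exact: additiveQZ0 chi_additive.
Qed.

Lemma herm_dual_Nm N (C : {ffun 'I_N -> V} -> Prop) c :
  @herm_dual p f F s N C c -> C c -> \sum_(i < N) Nm (c i).1 = 0.
Proof.
move=> c_dual Cc; rewrite -[RHS](congr1 (fun y : R => y.1) (c_dual c Cc)).
rewrite (big_morph (fun y : R => y.1) (fun _ _ => erefl) erefl).
by apply: eq_bigr => i _; rewrite /= -sE.
Qed.

Lemma self_dual_phi0 N (C : {ffun 'I_N -> V} -> Prop) c :
  @herm_dual p f F s N C c -> C c -> \sum_(i < N) phi0 p f (c i) =QZ 0.
Proof.
move=> c_dual Cc; under eq_bigr do rewrite phi0E.
have := @psi_sum _ (index_enum 'I_N) xpredT (fun i => Nm (c i).1) (fun i _ => Nm_fixed _).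
rewrite (herm_dual_Nm c_dual Cc) => /eqQZ_sym/eqQZ_trans; apply; apply: psi0.
Qed.

Lemma code_of_type_herm_self_dual N (C : {ffun 'I_N -> V} -> Prop) :
  left_submodule C ->
  code_of_type beta Phi C <->
  (forall x : {ffun 'I_N -> V}, C x <-> @herm_dual p f F s N C x).
Proof.
move=> C_sub; split=> [[_ [C_orth _]] x | C_self].
  by rewrite C_orth; apply: beta_orthogonal_herm_dual.
split; first exact: C_sub.
split=> [x | c phi Cc [l phiE]].
  by rewrite C_self; apply: iff_sym; apply: beta_orthogonal_herm_dual.
have := @eqQZ_sum _ (index_enum 'I_N) xpredT _ _ (fun i _ => phiE (c i)).
move/eqQZ_trans; apply.
rewrite exchange_big /=; apply: eqQZ_sum0 => t _; rewrite -mulr_sumr.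
have Ctc := C_sub.2.2 t.1 c Cc.
have := eqQZ_mulz t.2 (self_dual_phi0 ((C_self _).1 Ctc) Ctc).
by rewrite mulr0; under eq_bigr do rewrite ffunE.
Qed.

End Rho.

Theorem mainTheorem8 (p f : nat) (F : finFieldType) (s : {rmorphism F -> F}) :
  prime p -> (0 < f)%N -> #|F| = ((p ^ f) ^ 2)%N ->
  (forall x : F, s x = x ^+ (p ^ f)%N) ->
  [/\ form_ring (@beta_rho p f F s) (@Phi_rho p f F s),
      is_J (@beta_rho p f F s) (@J_rho p f F s),
      (forall v w : regskew s, beta_rho p f v w =QZ beta_rho p f w (- v)) &
      forall (N : nat) (C : {ffun 'I_N -> regskew s} -> Prop),
        left_submodule C ->
        (code_of_type (@beta_rho p f F s) (@Phi_rho p f F s) C <->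
         (forall x, C x <-> @herm_dual p f F s N C x))].
Proof.
move=> p_prime f_gt0 cardF sE; split.
- by apply: Phi_form_ring.
- by apply: beta_J.
- exact: beta_antisym.
- by move=> N C; apply: code_of_type_herm_self_dual.
Qed.
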